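(* In the blowup/base-change setting below, fix $p\in\{0,\dots,P-1\}$ and suppose that there are no special fibers at $B^{p,p+1}$, i.e. $\Delta'$ contains a monomial not divisible by $e_p$ nor by $e_{p+1}$. Then for every positive integer $k$: (1) $\bar n_{kp+r}=(k-r)\,n_p+r\,n_{p+1}$ for $r=0,1,\dots,k$; (2) there are no special fibers at $\bar B^{\bar p,\bar p+1}$ for any $\bar p=kp,\dots,k(p+1)-1$.
   Context: Blowup setting. Let $f=f(s,t;u)$, $g=g(s,t;u)$ be complex polynomials, homogeneous in $(s,t)$ of degrees $8$ and $12$, defining a family of Weierstrass models $y^2=x^3+fxz^4+gz^6$ over $\mathbb P^1_{[s:t]}$ with parameter $u$; $\Delta:=4f^3+27g^2$. Let $a,b$ be the vanishing orders in $s$ at $s=0$ of $f,g$ for generic $u\ne0$ (not both $a\ge4$, $b\ge6$), and write $f=s^a\sum_i\mathcal F_i\,s^it^{8-a-i}$, $g=s^b\sum_j\mathcal G_j\,s^jt^{12-b-j}$. Assume the 3-fold vanishing orders of $(f,g,\Delta)$ at $(u,s)=(0,0)$ (largest $N$ with the function in $(u,s)^N$, $t=1$) are $(4+\alpha,6+\beta,12+\gamma)$ with $\alpha=0$ or $\beta=0$, and that this persists under all base changes $u\mapsto u^\ell$ (Classes 1–4). Blowup chain: $e_0:=u$; the $p$-th blowup substitutes $e_{p-1}\mapsto e_{p-1}e_p$, $s\mapsto se_p$ and divides $f,g,\Delta$ by $e_p^4,e_p^6,e_p^{12}$; $\mu_{q,i}$, $\nu_{q,j}$ are the vanishing orders in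 $e_q$ of the coefficients $\mathcal F_i(e_0,\dots)$, $\mathcal G_j(e_0,\dots)$; $P$ is the first number of blowups for which some $i<4-a$ with $\mathcal F_i\neq0$ has $\mu_{P,i}<4-a-i$ or some $j<6-b$ with $\mathcal G_j\ne0$ has $\nu_{P,j}<6-b-j$. Standing assumption: there is such an $i$ with $\mu_{P,i}=0$ or such a $j$ with $\nu_{P,j}=0$ (achievable by a preliminary base change). Base components $B^p=\{e_p=0\}$ form a chain, $B^{p,p+1}=\{e_p=e_{p+1}=0\}$. $n_p$ is the largest power of $e_p$ dividing $\Delta$ and $\Delta=\prod_qe_q^{n_q}\Delta'$. There is a special fiber at $B^{p,p+1}$ iff $\Delta'$ vanishes there, i.e. every monomial of $\Delta'$ is divisible by $e_p$ or $e_{p+1}$. Base change: for a positive integer $k$, the barred configuration $\bar{\mathcal Y}$ is obtained by substituting $u\mapsto u^k$ in $f,g$ and then performing the blowup chain, which now consists of $\bar P=kP$ blowups with coordinates $\bar e_0,\dots,\bar e_{\bar P}$; $\bar B^{\bar p}$, $\bar B^{\bar p,\bar p+1}$, $\bar n_{\bar p}$, $\bar\Delta'$ are defined analogously. *)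

From HB Require Import structures.
From mathcomp Require Import all_boot all_order all_algebra.
From mathcomp.multinomials Require Import mpoly.
Set Implicit Arguments. Unset Strict Implicit. Unset Printing Implicit Defensive.
Import Order.TTheory GRing.Theory Num.Theory.
Local Open Scope ring_scope.

(* Original polynomials live in {mpoly C[3]}: variable 0 = s, 1 = t, 2 = u.
   After m blowups, the (numerator of the) transformed polynomial lives in
   {mpoly C[m.+3]}: variable 0 = s, 1 = t, q.+2 = e_q  (q = 0..m). *)

Section Defs.
Variable C : numClosedFieldType.

Definition vs : 'I_3 := ord0.
Definition vt : 'I_3 := inord 1.
Definition vu : 'I_3 := inord 2.

Definition disc (f g : {mpoly C[3]}) : {mpoly C[3]} := 4%:R * f ^+ 3 + 27%:R * g ^+ 2.

Definition bc (k : nat) (h : {mpoly C[3]}) : {mpoly C[3]} :=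
  h \mPo [tuple 'X_vs; 'X_vt; 'X_vu ^+ k].

Definition ev (m q : nat) : 'I_(m.+3) := inord q.+2.
Definition ss (m : nat) : 'I_(m.+3) := ord0.
Definition tt_ (m : nat) : 'I_(m.+3) := inord 1.

(* The blowup chain of m blowups (e_0 := u; the p-th blowup substitutes
   e_{p-1} -> e_{p-1} e_p, s -> s e_p).  Composing the m substitutions gives
   s -> s * prod_q e_q^q, t -> t, u -> prod_q e_q.  The transformed polynomial
   is [chain_num m h] divided by prod_q e_q^(w*q), where w = 4, 6, 12 for
   f, g, Delta (the divisions by e_p^w, transported by later substitutions). *)
Definition chain_num (m : nat) (h : {mpoly C[3]}) : {mpoly C[m.+3]} :=
  h \mPo [tuple 'X_(ss m) * \prod_(q < m.+1) 'X_(ev m q) ^+ q;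
                'X_(tt_ m);
                \prod_(q < m.+1) 'X_(ev m q)].

Definition seqmin (s : seq nat) : nat := if s is x :: s' then foldr minn x s' else 0%N.

Definition mval n (p : {mpoly C[n]}) (i : 'I_n) : nat :=
  seqmin [seq (mon : 'X_{1..n}) i | mon <- msupp p].

(* same, restricted to the monomials of s-degree j, i.e. for the coefficient
   of s^j (as a polynomial in the other variables) *)
Definition mvalS n (p : {mpoly C[n]}) (sv : 'I_n) (j : nat) (i : 'I_n) : nat :=
  seqmin [seq (mon : 'X_{1..n}) i | mon <- msupp p & (mon : 'X_{1..n}) sv == j].

(* vanishing order in e_q of a transformed polynomial of weight w after m blowups *)
Definition vord (w m : nat) (h : {mpoly C[3]}) (q : nat) : int :=
  (mval (chain_num m h) (ev m q))%:Z - (w * q)%:Z.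

Definition nord (m : nat) (D : {mpoly C[3]}) (q : nat) : int := vord 12 m D q.

(* Delta' = Delta / prod_q e_q^(n_q) = chain_num / prod_q e_q^(mval) *)
Definition dprime (m : nat) (D : {mpoly C[3]}) : {mpoly C[m.+3]} :=
  let N := chain_num m D in
  let V := [multinom (if (2 <= i)%N then mval N i else 0%N) | i < m.+3] in
  \sum_(mon <- msupp N) N@_mon *: 'X_[(mon - V)%MM].

Definition special_fiber (m : nat) (D : {mpoly C[3]}) (p : nat) : bool :=
  all (fun mon : 'X_{1..m.+3} => (0 < mon (ev m p)) || (0 < mon (ev m p.+1)))%N
      (msupp (dprime m D)).

(* coefficient of s^j (F_i with j = a + i) is nonzero *)
Definition coef_nz (h : {mpoly C[3]}) (j : nat) : bool :=
  has (fun mon : 'X_{1..3} => mon vs == j) (msupp h).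

(* mu_{m,i} (w = 4) / nu_{m,j} (w = 6): vanishing order in e_m of the
   coefficient of s^j after m blowups *)
Definition cord (w m : nat) (h : {mpoly C[3]}) (j : nat) : int :=
  (mvalS (chain_num m h) (ss m) j (ev m m))%:Z - (w * m)%:Z.

Definition Pcond (f g : {mpoly C[3]}) (m : nat) : Prop :=
  (exists j, (j < 4)%N /\ coef_nz f j /\ cord 4 m f j < (4 - j)%:Z) \/
  (exists j, (j < 6)%N /\ coef_nz g j /\ cord 6 m g j < (6 - j)%:Z).

(* membership in (u,s)^N at t = 1 *)
Definition inI (h : {mpoly C[3]}) (N : nat) : bool :=
  all (fun mon : 'X_{1..3} => (N <= mon vs + mon vu)%N) (msupp h).
Definition ord3_eq (h : {mpoly C[3]}) (N : nat) : Prop := inI h N /\ ~~ inI h N.+1.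

Definition class14 (f g : {mpoly C[3]}) : Prop :=
  exists alpha beta gamma : nat,
    ord3_eq f (4 + alpha) /\ ord3_eq g (6 + beta) /\ ord3_eq (disc f g) (12 + gamma)
    /\ (alpha = 0%N \/ beta = 0%N).

Definition homog_st (h : {mpoly C[3]}) (d : nat) : bool :=
  all (fun mon : 'X_{1..3} => mon vs + mon vt == d)%N (msupp h).

Definition s_ord_ge (h : {mpoly C[3]}) (N : nat) : bool :=
  all (fun mon : 'X_{1..3} => (N <= mon vs)%N) (msupp h).

End Defs.

From HB Require Import structures.
From mathcomp Require Import all_boot all_order all_algebra.
From mathcomp.multinomials Require Import mpoly.
From mathcomp Require Import zify.
Set Implicit Arguments. Unset Strict Implicit. Unset Printing Implicit Defensive.
Import Order.TTheory GRing.Theory Num.Theory.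
Local Open Scope ring_scope.

(* After the chain of blowups, a monomial s^a t^b u^c of Delta becomes a
   monomial with e_q-exponent q a + c, and after the base change u -> u^k one
   with e_q-exponent q a + k c.  Hence n_q is the minimum of these linear forms
   over the support of Delta, minus 12 q, and Delta' lowers every e_q-exponent
   by that minimum.  No special fiber at B^{p,p+1} thus means that a single
   monomial minimizes the forms for q = p and q = p + 1.  Since
   (k p + r) a + k c = (k - r) (p a + c) + r ((p + 1) a + c), the same monomial
   minimizes the barred forms for every q = k p + r with r <= k, which yields
   the interpolation formula and the absence of special fibers in between. *)

Lemma seqmin_le {s : seq nat} {y} : y \in s -> (seqmin s <= y)%N.
Proof.
case: s => // x s; elim: s x y => [|z s IH] x y; first by rewrite inE => /eqP->.
rewrite /= geq_min !inE => /or3P[/eqP->|/eqP->|ys].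
- by rewrite (IH x x) ?mem_head ?orbT.
- by rewrite leqnn.
- by rewrite (IH x y) ?inE ?ys ?orbT.
Qed.

Lemma seqmin_mem x (s : seq nat) : seqmin (x :: s) \in x :: s.
Proof.
elim: s => [|z s IH] /=; first exact: mem_head.
rewrite /minn; case: ifP => _; first by rewrite !inE eqxx orbT.
by move: IH; rewrite !inE => /orP[->|->]; rewrite ?orbT.
Qed.

Lemma seqmin_eq (s : seq nat) v :
  v \in s -> (forall y, y \in s -> (v <= y)%N) -> seqmin s = v.
Proof.
case: s => // x s vs minv; apply/eqP; rewrite eqn_leq seqmin_le //.
by rewrite minv // seqmin_mem.
Qed.

Lemma eq_seqmin (s1 s2 : seq nat) : s1 =i s2 -> seqmin s1 = seqmin s2.
Proof.
case: s1 => [|x s1] eq12.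
  by case: s2 eq12 => // y s2 /(_ y); rewrite in_nil mem_head.
symmetry; apply: seqmin_eq; first by rewrite -eq12 seqmin_mem.
by move=> y; rewrite -eq12; apply: seqmin_le.
Qed.

Section Minimizers.
Variable T : eqType.
Implicit Types (s : seq T) (F G : T -> nat).

Definition minimizes s F (x : T) := all (fun y => F x <= F y)%N s.

Lemma seqmin_map_minimizer {s F x} :
  x \in s -> minimizes s F x -> seqmin (map F s) = F x.
Proof.
move=> xs /allP minx; apply: seqmin_eq; first exact: map_f.
by move=> _ /mapP[y ys ->]; apply: minx.
Qed.

Lemma minimizesE s F x : x \in s -> minimizes s F x = (F x <= seqmin (map F s))%N.
Proof.
move=> xs; apply/idP/idP => [minx | le_min].
  by rewrite (seqmin_map_minimizer xs minx).
by apply/allP => y ys; apply: leq_trans le_min (seqmin_le (map_f F ys)).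
Qed.

Lemma eq_minimizes s F G x : F =1 G -> minimizes s F x = minimizes s G x.
Proof. by move=> eqFG; apply: eq_all => y; rewrite !eqFG. Qed.

Lemma minimizes_lincomb s F G (u v : nat) x :
  minimizes s F x -> minimizes s G x -> minimizes s (fun y => u * F y + v * G y)%N x.
Proof.
move=> /allP minF /allP minG; apply/allP => y ys.
by rewrite leq_add // leq_mul // (minF, minG).
Qed.

End Minimizers.

Section MonomialMaps.
Variable R : nzRingType.
Implicit Types (n k : nat).

Definition mmap_mnm n k (h : {mpoly R[n]}) (F : 'X_{1..n} -> 'X_{1..k}) : {mpoly R[k]} :=
  \sum_(m <- msupp h) h@_m *: 'X_[F m].

Definition mnm_subst n k (w : 'I_n -> 'X_{1..k}) (m : 'X_{1..n}) : 'X_{1..k} :=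
  (\sum_(i < n) w i *+ m i)%MM.

Lemma mnm_substE n k (w : 'I_n -> 'X_{1..k}) m j :
  mnm_subst w m j = (\sum_(i < n) w i j * m i)%N.
Proof. by rewrite /mnm_subst mnm_sumE; apply: eq_bigr => i _; rewrite mulmnE. Qed.

Lemma mcoeff_mmap_mnm n k (h : {mpoly R[n]}) (F : 'X_{1..n} -> 'X_{1..k}) m0 :
  {in msupp h &, injective F} -> m0 \in msupp h -> (mmap_mnm h F)@_(F m0) = h@_m0.
Proof.
move=> injF hm0; rewrite /mmap_mnm raddf_sum (bigD1_seq m0) ?msupp_uniq //=.
rewrite mcoeffZ mcoeffX eqxx mulr1 big_seq_cond big1 ?addr0 // => m /andP[hm ne_m].
rewrite mcoeffZ mcoeffX; case: eqP => [/injF eq_m|]; last by rewrite mulr0.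
by rewrite eq_m ?eqxx in ne_m.
Qed.

Lemma msupp_mmap_mnm n k (h : {mpoly R[n]}) (F : 'X_{1..n} -> 'X_{1..k}) :
  {in msupp h &, injective F} -> msupp (mmap_mnm h F) =i map F (msupp h).
Proof.
move=> injF m; rewrite mcoeff_msupp.
have [/mapP[m0 hm0 ->]|notFm] := boolP (m \in map F _).
  by rewrite mcoeff_mmap_mnm // -mcoeff_msupp.
rewrite /mmap_mnm raddf_sum big1_seq ?eqxx // => m0 hm0.
rewrite /= mcoeffZ mcoeffX; case: eqP => [eq_m|]; last by rewrite mulr0.
by rewrite -eq_m map_f in notFm.
Qed.

Lemma prod_mpolyX n k (lq : n.-tuple {mpoly R[k]}) (w : 'I_n -> 'X_{1..k})
    (m : 'X_{1..n}) :
  (forall i, tnth lq i = 'X_[w i]) ->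
  \prod_(i < n) tnth lq i ^+ m i = 'X_[mnm_subst w m].
Proof.
move=> lqE; rewrite (big_morph (mpolyX R) (@mpolyXD _ _) (@mpolyX0 _ _)).
by apply: eq_bigr => i _; rewrite lqE mpolyXn.
Qed.

Lemma comp_mpoly_mnm n k (h : {mpoly R[n]}) (lq : n.-tuple {mpoly R[k]}) w :
  (forall i, tnth lq i = 'X_[w i]) -> h \mPo lq = mmap_mnm h (mnm_subst w).
Proof.
by move=> lqE; rewrite comp_mpolyE; apply: eq_bigr => m _; rewrite (prod_mpolyX _ lqE).
Qed.

Lemma comp_mmap_mnm n k l (h : {mpoly R[n]}) (F : 'X_{1..n} -> 'X_{1..k})
    (lq : k.-tuple {mpoly R[l]}) w :
  (forall i, tnth lq i = 'X_[w i]) ->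
  mmap_mnm h F \mPo lq = mmap_mnm h (mnm_subst w \o F).
Proof.
move=> lqE; rewrite /mmap_mnm raddf_sum; apply: eq_bigr => m _.
by rewrite /= comp_mpolyZ comp_mpolyX (prod_mpolyX _ lqE).
Qed.

End MonomialMaps.

Lemma mval_mmap_mnm (C : numClosedFieldType) n k (h : {mpoly C[n]})
    (F : 'X_{1..n} -> 'X_{1..k}) i :
  {in msupp h &, injective F} ->
  mval (mmap_mnm h F) i = seqmin [seq F m i | m <- msupp h].
Proof.
move=> injF; rewrite /mval; apply: eq_seqmin => y.
apply/mapP/mapP => [[m' + ->] | [m hm ->]].
  by rewrite msupp_mmap_mnm // => /mapP[m hm ->]; exists m.
by exists (F m); rewrite ?msupp_mmap_mnm ?map_f.
Qed.

Lemma val_ev M q : (q < M.+1)%N -> nat_of_ord (ev M q) = q.+2.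
Proof. by move=> ltqM; rewrite /ev inordK. Qed.

Lemma mnm_sum_ev M (F : nat -> nat) (j : 'I_M.+3) :
  (\sum_(q < M.+1) U_(ev M q) *+ F q)%MM j = if (2 <= j)%N then F (j - 2)%N else 0%N.
Proof.
rewrite mnm_sumE.
under eq_bigr => q _ do rewrite mulmnE mnm1E -val_eqE /= (@val_ev _ _ (ltn_ord q)).
case: ifP => le2j.
  have ltjM : (j - 2 < M.+1)%N by have := ltn_ord j; lia.
  rewrite (bigD1 (Ordinal ltjM)) //= big1 => [|q ne_q].
    by rewrite (_ : (j - 2).+2 = j) ?eqxx ?mul1n ?addn0 //; lia.
  by case: eqP => // eq_q; move/eqP: ne_q; case; apply: val_inj => /=; lia.
by rewrite big1 // => q _; case: eqP => // eq_q; rewrite -eq_q in le2j.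
Qed.

Lemma sum_ord3 (F : 'I_3 -> nat) : (\sum_(i < 3) F i = F vs + F vt + F vu)%N.
Proof.
rewrite !big_ord_recl big_ord0 addn0 addnA.
by congr (_ + _ + _); congr F; apply: val_inj; rewrite /= inordK.
Qed.

Lemma ord3_cases (i : 'I_3) : [\/ i = vs, i = vt | i = vu].
Proof.
by case: i => [[|[|[|//]]] lti3]; [apply: Or31 | apply: Or32 | apply: Or33];
  apply: val_inj; rewrite /= ?inordK.
Qed.

Definition chain_mnm M (i : 'I_3) : 'X_{1..M.+3} :=
  if val i == 0%N then (U_(ss M) + \sum_(q < M.+1) U_(ev M q) *+ q)%MM
  else if val i == 1%N then U_(tt_ M)%MM
  else (\sum_(q < M.+1) U_(ev M q) *+ 1)%MM.

Definition bc_mnm k (i : 'I_3) : 'X_{1..3} := (U_(i) *+ (if i == vu then k else 1))%MM.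

Lemma mnm_subst_bcE k (m : 'X_{1..3}) j :
  mnm_subst (bc_mnm k) m j = ((if j == vu then k else 1) * m j)%N.
Proof.
rewrite mnm_substE (bigD1 j) //= big1 => [|i ne_ij]; rewrite mulmnE mnm1E.
  by rewrite eqxx addn0 mul1n mulnC.
by rewrite (negbTE ne_ij).
Qed.

Lemma mnm_subst_chainE M (m : 'X_{1..3}) (j : 'I_M.+3) :
  mnm_subst (chain_mnm M) m j =
  if val j == 0%N then m vs else if val j == 1%N then m vt
  else ((j - 2) * m vs + m vu)%N.
Proof.
rewrite mnm_substE sum_ord3 /chain_mnm /= [val vt]inordK // [val vu]inordK //=.
rewrite mnmDE (mnm_sum_ev id) (mnm_sum_ev (fun=> 1%N)) !mnm1E -!val_eqE /=.
rewrite /tt_ inordK //.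
by case: j => [[|[|j]] ltjM] /=;
  rewrite ?muln0 ?mul0n ?addn0 ?add0n ?muln1 ?mul1n ?subn2 // mulnC.
Qed.

Definition chain_bc_mnm M k : 'X_{1..3} -> 'X_{1..M.+3} :=
  mnm_subst (chain_mnm M) \o mnm_subst (bc_mnm k).

(* The exponent of e_q in the image of s^a t^b u^c under u -> u^k and the chain. *)
Definition chain_exp q k (m : 'X_{1..3}) : nat := (q * m vs + k * m vu)%N.

Lemma chain_bc_mnm_ev M k m q :
  (q < M.+1)%N -> chain_bc_mnm M k m (ev M q) = chain_exp q k m.
Proof.
move=> ltqM; rewrite /= mnm_subst_chainE !val_ev //= !mnm_subst_bcE eqxx.
by rewrite -!val_eqE /= !inordK // subn2 mul1n.
Qed.

Lemma chain_bc_mnm_inj M k : (0 < k)%N -> injective (chain_bc_mnm M k).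
Proof.
move=> k_gt0 m1 m2 eq_m.
have coordE j : chain_bc_mnm M k m1 j = chain_bc_mnm M k m2 j by rewrite eq_m.
have:= coordE (ss M); have:= coordE (tt_ M); have:= coordE (ev M 0).
rewrite !chain_bc_mnm_ev // /chain_exp /= !mnm_subst_chainE /= [val (tt_ M)]inordK //=.
rewrite !mnm_subst_bcE -!val_eqE /= [val vt]inordK // [val vu]inordK // !mul1n.
move=> /eqP; rewrite eqn_mul2l eqn0Ngt k_gt0 /= => /eqP eq_u eq_t eq_s.
by apply/mnmP => i; case: (ord3_cases i) => ->.
Qed.

Lemma chain_exp_interpolate k p r x : (r <= k)%N ->
  chain_exp (k * p + r) k x = ((k - r) * chain_exp p 1 x + r * chain_exp p.+1 1 x)%N.
Proof. by move=> le_rk; rewrite /chain_exp -{1 2}(subnK le_rk); nia. Qed.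

Section Chain.
Variable C : numClosedFieldType.
Implicit Types D h : {mpoly C[3]}.

(* Delta' lowers the e_q-exponent of each monomial by its minimum over the support. *)
Lemma special_fiber_mmap M (D0 D : {mpoly C[3]}) (G : 'X_{1..3} -> 'X_{1..M.+3}) p :
  injective G -> (p < M)%N -> chain_num M D0 = mmap_mnm D G ->
  special_fiber M D0 p =
  ~~ has (fun x => minimizes (msupp D) (fun y => G y (ev M p)) x &&
                   minimizes (msupp D) (fun y => G y (ev M p.+1)) x) (msupp D).
Proof.
move=> injG ltpM ND; rewrite /special_fiber /dprime.
set N := chain_num M D0; set V := [multinom _ | i < _].
have injGD : {in msupp D &, injective G} by apply: in2W.
have le_V mon : mon \in msupp N -> (V <= mon)%MM.
  move=> hmon; apply/mnm_lepP => i; rewrite mnmE; case: ifP => // _.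
  exact/seqmin_le/map_f.
have injV : {in msupp N &, injective (fun mon => mon - V)%MM}.
  by move=> m1 m2 h1 h2 /= eq_m; rewrite -(submK (le_V _ h1)) eq_m submK ?le_V.
have VE q : (q < M.+1)%N -> V (ev M q) = seqmin [seq G x (ev M q) | x <- msupp D].
  by move=> ltqM; rewrite mnmE val_ev //= /N ND mval_mmap_mnm.
have suppN : msupp N =i map G (msupp D) by rewrite /N ND; apply: msupp_mmap_mnm.
rewrite -[\sum_(_ <- _) _]/(mmap_mnm N (fun mon => mon - V)%MM).
rewrite (eq_all_r (msupp_mmap_mnm injV)) all_map (eq_all_r suppN) all_map -all_predC.
have ltp : (p < M.+1)%N by apply: ltnW.
apply: eq_in_all => x hx /=; rewrite !mnmBE !subn_gt0 !VE // !minimizesE //.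
by rewrite negb_and -!ltnNge.
Qed.

Lemma tnth_chain M i :
  tnth [tuple 'X_(ss M) * \prod_(q < M.+1) 'X_(ev M q) ^+ q; 'X_(tt_ M);
          \prod_(q < M.+1) 'X_(ev M q)] i = 'X_[chain_mnm M i] :> {mpoly C[M.+3]}.
Proof.
have prodXE F : \prod_(q < M.+1) 'X_(ev M q) ^+ F q =
                'X_[\sum_(q < M.+1) U_(ev M q) *+ F q] :> {mpoly C[M.+3]}.
  rewrite (big_morph (mpolyX C) (@mpolyXD _ _) (@mpolyX0 _ _)).
  by apply: eq_bigr => q _; rewrite mpolyXn.
case: i => [[|[|[|//]]] lti3]; rewrite (tnth_nth 0) /= /chain_mnm //=.
  by rewrite mpolyXD prodXE.
by rewrite -prodXE; apply: eq_bigr => q _; rewrite expr1.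
Qed.

Lemma tnth_bc k i :
  tnth [tuple 'X_vs; 'X_vt; 'X_vu ^+ k] i = 'X_[bc_mnm k i] :> {mpoly C[3]}.
Proof.
rewrite /bc_mnm -mpolyXn.
by case: (ord3_cases i) => ->; rewrite (tnth_nth 0) -val_eqE /= ?inordK ?expr1.
Qed.

Lemma chain_num_bc M k h :
  chain_num M (bc k h) = mmap_mnm h (chain_bc_mnm M k).
Proof.
rewrite /chain_num /bc (comp_mpoly_mnm _ (tnth_bc k)).
exact: comp_mmap_mnm (tnth_chain M).
Qed.

Lemma bc1 h : bc 1 h = h.
Proof.
rewrite /bc -[RHS]comp_mpoly_id; congr comp_mpoly.
apply: eq_from_tnth => i; rewrite tnth_mktuple expr1.
by case: (ord3_cases i) => ->; rewrite (tnth_nth 0) /= ?inordK.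
Qed.

Lemma disc_bc k (f g : {mpoly C[3]}) : disc (bc k f) (bc k g) = bc k (disc f g).
Proof. by rewrite /disc /bc rmorphD !rmorphM !rmorph_nat !exprS !expr0 !mulr1. Qed.

Lemma nord_chain_bc M k D q : (0 < k)%N -> (q < M.+1)%N ->
  nord M (bc k D) q = (seqmin [seq chain_exp q k x | x <- msupp D])%:Z - (12 * q)%:Z.
Proof.
move=> k_gt0 ltqM; rewrite /nord /vord chain_num_bc mval_mmap_mnm.
  by rewrite (eq_map (fun x => chain_bc_mnm_ev k x ltqM)).
by apply: in2W; apply: chain_bc_mnm_inj.
Qed.

Lemma nord_chain M D q : (q < M.+1)%N ->
  nord M D q = (seqmin [seq chain_exp q 1 x | x <- msupp D])%:Z - (12 * q)%:Z.
Proof. by rewrite -{1}(bc1 D); apply: nord_chain_bc. Qed.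

Lemma special_fiber_chain_bc M k D p : (0 < k)%N -> (p < M)%N ->
  special_fiber M (bc k D) p =
  ~~ has (fun x => minimizes (msupp D) (chain_exp p k) x &&
                   minimizes (msupp D) (chain_exp p.+1 k) x) (msupp D).
Proof.
move=> k_gt0 ltpM; have ltp : (p < M.+1)%N by apply: ltnW.
rewrite (special_fiber_mmap (@chain_bc_mnm_inj M k k_gt0) ltpM (chain_num_bc M k D)).
have chain_expE q : (q < M.+1)%N -> chain_bc_mnm M k ^~ (ev M q) =1 chain_exp q k.
  by move=> ltqM x; rewrite chain_bc_mnm_ev.
by congr (~~ _); apply: eq_has => x; rewrite !(eq_minimizes _ _ (chain_expE _ _)).
Qed.

End Chain.

Theorem lemma1 (C : numClosedFieldType) (f g : {mpoly C[3]}) (P p : nat) :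
  homog_st f 8 -> homog_st g 12 ->
  ~ (s_ord_ge f 4 /\ s_ord_ge g 6) ->
  (forall l : nat, (0 < l)%N -> class14 (bc l f) (bc l g)) ->
  Pcond f g P -> (forall m : nat, (m < P)%N -> ~ Pcond f g m) ->
  ((exists j, (j < 4)%N /\ coef_nz f j /\ cord 4 P f j = 0) \/
   (exists j, (j < 6)%N /\ coef_nz g j /\ cord 6 P g j = 0)) ->
  (p < P)%N ->
  ~~ special_fiber P (disc f g) p ->
  forall k : nat, (0 < k)%N ->
    (forall r : nat, (r <= k)%N ->
       nord (k * P) (disc (bc k f) (bc k g)) (k * p + r) =
         (k - r)%:Z * nord P (disc f g) p + r%:Z * nord P (disc f g) p.+1) /\
    (forall pb : nat, (k * p <= pb < k * p.+1)%N ->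
       ~~ special_fiber (k * P) (disc (bc k f) (bc k g)) pb).
Proof.
move=> _ _ _ _ _ _ _ ltpP no_sf k k_gt0; rewrite disc_bc; set D := disc f g in no_sf *.
have [x0 Dx0 /andP[min_p min_p1]] : exists2 x0, x0 \in msupp D &
    minimizes (msupp D) (chain_exp p 1) x0 && minimizes (msupp D) (chain_exp p.+1 1) x0.
  by apply/hasP; move: no_sf; rewrite -{1}(bc1 D) special_fiber_chain_bc ?negbK.
have min_kp r : (r <= k)%N -> minimizes (msupp D) (chain_exp (k * p + r) k) x0.
  move=> le_rk; rewrite (eq_minimizes _ _ (fun x => chain_exp_interpolate p x le_rk)).
  exact: minimizes_lincomb.
split=> [r le_rk | pb /andP[le_kp_pb lt_pb]].
  rewrite nord_chain_bc // ?(seqmin_map_minimizer Dx0 (min_kp r le_rk)); last by nia.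
  rewrite !nord_chain ?ltnS ?(ltnW ltpP) //.
  rewrite (seqmin_map_minimizer Dx0 min_p) (seqmin_map_minimizer Dx0 min_p1).
  rewrite chain_exp_interpolate //; move: (k - r)%N (subnK le_rk) => d <-; nia.
have [r le_rk ->] : exists2 r, (r < k)%N & pb = (k * p + r)%N.
  by exists (pb - k * p)%N; lia.
rewrite special_fiber_chain_bc ?negbK //; last by nia.
by apply/hasP; exists x0; rewrite // -addnS !min_kp // ltnW.
Qed.
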